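(* Let $n\ge 2$, let $P_n$ be the path with vertices $x_1,\dots,x_n$ and edges $\{x_i,x_{i+1}\}$, let $\mathcal C$ be a maximal independent set of $P_n$ with $c:=|\mathcal C|$, and let $G$ be the $\mathcal C$-suspension of $P_n$. Let $\alpha:=\lceil n/2\rceil$, $b_n:=(-1)^{\lceil n/2\rceil}P_{P_n}(-1)$, $\delta_0=0$ if $x_1\in\mathcal C$ and $1$ otherwise, $\delta_t=0$ if $x_n\in\mathcal C$ and $1$ otherwise, and $\delta:=\delta_0+\delta_t$. Then: (a) If $n\equiv 0,2\pmod 3$, then $\mathfrak a(G)=0$ and $h_{\alpha(G)}(G)=-b_n$ if $c+\delta=\alpha+1$, while $h_{\alpha(G)}(G)=b_n$ if $c+\delta\le\alpha$. (b) If $n=3k+1$ and $\mathcal C=\{x_1,x_4,\dots,x_{3k+1}\}$, then $\mathfrak a(G)=0$ and $h_{\alpha(G)}(G)=(-1)^{\alpha+k+1}$. (c) In all remaining cases, $\mathfrak a(G)<0$.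
   Context: For $\varnothing\ne C\subseteq V(G)$, the $C$-suspension of $G$ is obtained by adding a new vertex $z$ adjacent exactly to the vertices of $C$. The independence polynomial is $P_G(x)=\sum_i g_ix^i$, $g_i$ the number of independent sets of size $i$. For $G$ on vertex set $[N]$, let $S=K[y_1,\dots,y_N]$ ($K$ a field), $I(G)$ the edge ideal generated by $y_iy_j$ for edges $\{i,j\}$, $\alpha(G)$ the independence number (equal to $\dim S/I(G)$), and write the Hilbert series of $S/I(G)$ uniquely as $h_G(t)/(1-t)^{\alpha(G)}$ with $h_G(t)=\sum_i h_i(G)t^i$ a polynomial with nonzero leading coefficient ($h_i(G)=0$ for $i>\deg h_G$). The $\mathfrak a$-invariant is $\mathfrak a(G)=\deg h_G(t)-\alpha(G)$, and $h_{\alpha(G)}(G)$ is the coefficient of $t^{\alpha(G)}$ in $h_G(t)$. *)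

From mathcomp Require Import all_boot all_order all_algebra.
Set Implicit Arguments. Unset Strict Implicit. Unset Printing Implicit Defensive.
Import Order.TTheory GRing.Theory Num.Theory.

(* Simple graphs: a (symmetric, irreflexive) relation e on a finite type T. *)

Definition indep (T : finType) (e : rel T) (A : {set T}) : bool :=
  [forall x in A, forall y in A, ~~ e x y].

Definition max_indep (T : finType) (e : rel T) (C : {set T}) : bool :=
  indep e C && [forall x, (x \notin C) ==> ~~ indep e (x |: C)].

Definition indep_num (T : finType) (e : rel T) : nat :=
  \max_(A : {set T} | indep e A) #|A|.

Definition indep_poly (T : finType) (e : rel T) : {poly int} :=
  (\sum_(A : {set T} | indep e A) 'X^#|A|)%R.

(* The path P_n on vertices 'I_n (vertex i stands for x_{i+1}). *)
Definition path_rel (n : nat) : rel 'I_n :=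
  fun i j => (i.+1 == j :> nat) || (j.+1 == i :> nat).

(* C-suspension: new vertex z = None adjacent exactly to the vertices of C. *)
Definition suspension (T : finType) (e : rel T) (C : {set T}) : rel (option T) :=
  fun u v => match u, v with
             | Some x, Some y => e x y
             | Some x, None => x \in C
             | None, Some y => y \in C
             | None, None => false
             end.

(* Hilbert function of S/I(G), S = K[y_v : v in T]: the monomials not in the
   monomial ideal I(G) form a K-basis of S/I(G), so dim_K (S/I(G))_d is the
   number of exponent vectors m : T -> nat of total degree d such that the
   monomial y^m is not divisible by any y_u y_v with {u,v} an edge
   (for a loopless graph: not both m u > 0 and m v > 0).  Exponents of a
   monomial of degree d are < d.+1, so {ffun T -> 'I_d.+1} covers them all. *)
Definition standard_monomial (T : finType) (e : rel T) (d : nat)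
    (m : {ffun T -> 'I_d.+1}) : bool :=
  (\sum_(v : T) (m v : nat) == d)%N &&
  [forall u, forall v, e u v ==> ~~ ((0 < m u)%N && (0 < m v)%N)].

Definition hilb_fun (T : finType) (e : rel T) (d : nat) : nat :=
  #|[set m : {ffun T -> 'I_d.+1} | standard_monomial e m]|.

(* Coefficients of HS(t) * (1-t)^alpha(G), where HS(t) = sum_d H(d) t^d.
   These are the coefficients h_i(G) of the h-polynomial h_G(t). *)
Definition hcoef (T : finType) (e : rel T) (i : nat) : int :=
  (\sum_(j < i.+1) (-1) ^+ j * ('C(indep_num e, j))%:Z * (hilb_fun e (i - j))%:Z)%R.

Definition is_hpoly (T : finType) (e : rel T) (p : {poly int}) : Prop :=
  forall i, (p`_i)%R = hcoef e i.

Definition a_inv_of (T : finType) (e : rel T) (p : {poly int}) : int :=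
  ((size p).-1)%:Z - (indep_num e)%:Z.

(* The Hilbert series of S/I(G) is the sum over the independent sets A of
   (t/(1-t))^|A|, so h_G(t) = sum_A t^|A| (1-t)^(alpha(G)-|A|): its coefficient
   of t^alpha(G) is (-1)^alpha(G) P_G(-1), and a(G) is 0 when P_G(-1) <> 0 and
   negative otherwise.  For the C-suspension, P_G(-1) = P_{P_n}(-1) - Q(-1) and
   alpha(G) = max(alpha(P_n), 1 + alpha(P_n - C)), where Q is the independence
   polynomial of P_n - C.  Splitting off the first vertex of a path with deleted
   vertices gives the recursion Q_{b c} = Q_c + [b = 0] x Q_{c'}: hence
   P_{P_n}(-1) vanishes iff n = 1 mod 3, and since a maximal independent set of
   a path leaves gaps of one or two vertices, Q(-1) <> 0 only for
   C = {x_1, x_4, ..., x_{3k+1}}, while 1 + alpha(P_n - C) = |C| + delta. *)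

From mathcomp Require Import all_boot all_order all_algebra.
From mathcomp Require Import ring zify.
Import Order.TTheory GRing.Theory Num.Theory.

Set Implicit Arguments. Unset Strict Implicit. Unset Printing Implicit Defensive.

Local Open Scope ring_scope.

Section PolyModXn.
Variable R : comNzRingType.
Implicit Types p q : {poly R}.

Definition eqmodXn k p q := exists r, p = q + r * 'X^k.

Lemma eqmodXn_refl k p : eqmodXn k p p.
Proof. by exists 0; rewrite mul0r addr0. Qed.

Lemma eqmodXn_coef k p q i : eqmodXn k p q -> (i < k)%N -> p`_i = q`_i.
Proof. by case=> r ->; rewrite coefD coefMXn => ->; rewrite addr0. Qed.

Lemma eqmodXnM k p q p' q' :
  eqmodXn k p q -> eqmodXn k p' q' -> eqmodXn k (p * p') (q * q').
Proof. by case=> r -> [r' ->]; exists (r * q' + q * r' + r * r' * 'X^k); ring. Qed.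

Lemma eqmodXnX k p q m : eqmodXn k p q -> eqmodXn k (p ^+ m) (q ^+ m).
Proof.
move=> pq; elim: m => [|m IHm]; first exact: eqmodXn_refl.
by rewrite !exprS; apply: eqmodXnM.
Qed.

Lemma coef_1subX_pow m j : ((1 - 'X) ^+ m : {poly R})`_j = (-1) ^+ j *+ 'C(m, j).
Proof.
elim: m j => [|m IHm] j.
  by rewrite expr0 coef1; case: j => [|j]; rewrite ?bin0 ?bin0n ?mulr0n.
rewrite exprSr mulrBr mulr1 coefB coefMX IHm.
case: j => [|j] /=; first by rewrite !bin0 subr0.
by rewrite IHm binS mulrnDr exprS mulN1r !mulNrn.
Qed.

(* [xgeom N] is the truncation at degree N of the series X / (1 - X). *)
Definition xgeom N : {poly R} := \sum_(r < N.+1 | (0 < r)%N) 'X^r.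

Lemma xgeomS N : xgeom N.+1 = xgeom N + 'X^(N.+1).
Proof. by rewrite /xgeom big_mkcond big_ord_recr /= -big_mkcond. Qed.

Lemma xgeom0 : xgeom 0 = 0.
Proof. by rewrite /xgeom big_mkcond big_ord_recr big_ord0 /= add0r. Qed.

Lemma mul_1subX_xgeom N : (1 - 'X) * xgeom N = 'X - 'X^(N.+1).
Proof.
elim: N => [|N IHN]; first by rewrite xgeom0 mulr0 expr1 subrr.
by rewrite xgeomS mulrDr IHN [in RHS]exprS; ring.
Qed.

Lemma eqmodXn_xgeom d N : (d <= N)%N -> eqmodXn d.+1 (xgeom N) (xgeom d).
Proof.
move=> /subnK <-; elim: (N - d)%N => [|m [r IHm]]; first exact: eqmodXn_refl.
by rewrite addSn xgeomS IHm; exists (r + 'X^m); rewrite -addnS exprD; ring.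
Qed.

End PolyModXn.

Section HPolynomial.
Variables (T : finType) (e : rel T).

Definition msupp d (m : {ffun T -> 'I_d.+1}) : {set T} := [set v | (0 < m v)%N].

Lemma standard_monomialE d (m : {ffun T -> 'I_d.+1}) :
  standard_monomial e m = (\sum_v (m v : nat) == d)%N && indep e (msupp m).
Proof.
congr andb; apply/forallP/forallP => nadj u.
  apply/implyP; rewrite inE => hu; apply/forallP => v; apply/implyP; rewrite inE => hv.
  by move: (forallP (nadj u) v); rewrite hu hv; case: (e u v).
apply/forallP => v; apply/implyP => euv; apply/negP => /andP [hu hv].
by have := nadj u; rewrite inE hu => /forallP /(_ v); rewrite inE hv euv.
Qed.

Lemma prod_eq_mem (S A : {set T}) :
  (\prod_v ((v \in S) == (v \in A)))%N = (S == A).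
Proof.
case: eqP => [<-|/eqP]; first by rewrite big1 // => v _; rewrite eqxx.
rewrite eqEsubset negb_and => /orP neq.
have [v hv] : exists v, (v \in S) != (v \in A).
  by case: neq => /subsetPn [v hS hA]; exists v; rewrite ?hS ?hA // (negbTE hA).
by rewrite (bigD1 v) //= (negbTE hv) mul0n.
Qed.

(* Expanding the product, the terms are the exponent vectors with support A. *)
Lemma xgeom_pow_card d (A : {set T}) :
  xgeom int d ^+ #|A| =
  \sum_(m : {ffun T -> 'I_d.+1}) 'X^(\sum_v (m v : nat)) *+ (msupp m == A).
Proof.
rewrite -prodr_const.
transitivity (\prod_v \sum_(r : 'I_d.+1) ('X^r : {poly int}) *+ ((0 < r)%N == (v \in A))).
  rewrite big_mkcond; apply: eq_bigr => v _; case: (v \in A).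
    by rewrite /xgeom big_mkcond; apply: eq_bigr => r _; rewrite eqb_id mulrb.
  by rewrite big_ord_recl /= big1 ?addr0.
rewrite bigA_distr_bigA; apply: eq_bigr => m _; rewrite prodrMn prodrXr -prod_eq_mem.
by congr (_ *+ _); apply: eq_bigr => v _; rewrite inE.
Qed.

Lemma hilb_fun_indep d :
  (hilb_fun e d)%:Z = \sum_(A : {set T} | indep e A) (xgeom int d ^+ #|A|)`_d.
Proof.
under eq_bigr => A _ do rewrite xgeom_pow_card coef_sum.
rewrite exchange_big /= /hilb_fun -sum1dep_card -natz natr_sum big_mkcond /=.
apply: eq_bigr => m _; rewrite standard_monomialE.
rewrite (eq_bigr (fun A => ('X^(\sum_v (m v : nat)))`_d *+ (msupp m == A))) => [|A _];
  last exact: coefMn.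
rewrite coefXn [RHS]big_mkcond (bigD1 (msupp m)) //= [X in _ + X]big1 ?addr0 => [|A neq].
  by rewrite eqxx eq_sym; case: (_ == _)%N; case: (indep _ _).
by rewrite eq_sym in neq; rewrite (negbTE neq) mulr0n; case: ifP.
Qed.

Lemma card_le_indep_num (A : {set T}) : indep e A -> (#|A| <= indep_num e)%N.
Proof. by move=> indA; rewrite /indep_num (leq_bigmax_cond A indA). Qed.

Definition hpoly : {poly int} :=
  \sum_(A : {set T} | indep e A) 'X^#|A| * (1 - 'X) ^+ (indep_num e - #|A|).

Lemma is_hpoly_hpoly : is_hpoly e hpoly.
Proof.
move=> i; rewrite /hcoef.
transitivity (((1 - 'X) ^+ indep_num e *
   \sum_(A : {set T} | indep e A) xgeom int i ^+ #|A|)`_i); last first.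
  rewrite coefM; apply: eq_bigr => j _.
  rewrite coef_1subX_pow -mulr_natr natz hilb_fun_indep coef_sum; congr (_ * _).
  apply: eq_bigr => A _; apply: (eqmodXn_coef (k := (i - j).+1)) => //.
  by apply/eqmodXnX/eqmodXn_xgeom; apply: leq_subr.
rewrite /hpoly big_distrr /= !coef_sum; apply: eq_bigr => A /card_le_indep_num leA.
rewrite -[in RHS](subnK leA) exprD -mulrA -exprMn mul_1subX_xgeom mulrC.
symmetry; apply: (eqmodXn_coef (k := i.+1)) => //.
by apply/eqmodXnM/eqmodXnX; [apply: eqmodXn_refl | exists (-1); rewrite mulN1r].
Qed.

Lemma coef_hpoly_indep_num :
  hpoly`_(indep_num e) = (-1) ^+ indep_num e * (indep_poly e).[-1].
Proof.
rewrite /hpoly coef_sum /indep_poly horner_sum mulr_sumr.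
apply: eq_bigr => A /card_le_indep_num leA.
rewrite coefXnM ltnNge leA /= coef_1subX_pow binn hornerXn.
by rewrite -signr_odd oddB // signr_addb !signr_odd.
Qed.

Lemma size_hpoly : (size hpoly <= (indep_num e).+1)%N.
Proof.
apply/leq_sizeP => j ltj; rewrite /hpoly coef_sum big1 // => A /card_le_indep_num leA.
rewrite coefXnM; case: ifP => // _; rewrite coef_1subX_pow bin_small ?mulr0n //; lia.
Qed.

Lemma a_inv_hpoly_eq0 : (indep_poly e).[-1] != 0 -> a_inv_of e hpoly = 0.
Proof.
move=> Pm1_neq0; rewrite /a_inv_of.
suff -> : size hpoly = (indep_num e).+1 by rewrite subrr.
apply/eqP; rewrite eqn_leq size_hpoly /=; apply: contraT; rewrite -leqNgt.
move=> /leq_sizeP /(_ _ (leqnn _)) /eqP; rewrite coef_hpoly_indep_num mulf_eq0.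
by rewrite signr_eq0 (negbTE Pm1_neq0).
Qed.

Lemma a_inv_hpoly_lt0 :
  (0 < indep_num e)%N -> (indep_poly e).[-1] = 0 -> a_inv_of e hpoly < 0.
Proof.
move=> alpha_gt0 Pm1_eq0.
have : (size hpoly <= indep_num e)%N.
  apply/leq_sizeP => j; rewrite leq_eqVlt => /orP [/eqP <-|ltj].
    by rewrite coef_hpoly_indep_num Pm1_eq0 mulr0.
  exact: (leq_sizeP _ _ size_hpoly).
rewrite /a_inv_of subr_lt0 ltz_nat; case: (size _) => [|s] /=; lia.
Qed.

End HPolynomial.

Fixpoint bitseqs n : seq bitseq :=
  if n is n'.+1 then
    [seq true :: s | s <- bitseqs n'] ++ [seq false :: s | s <- bitseqs n']
  else [:: [::]].

Lemma mem_bitseqs n s : (s \in bitseqs n) = (size s == n).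
Proof.
elim: n s => [|n IHn] [|b s] //=; rewrite mem_cat.
  by apply/negP => /orP [] /mapP [].
have cons_inj (b' : bool) : injective (cons b') by move=> ? ? [].
by case: b; rewrite (mem_map (cons_inj _)) IHn; case: mapP => [[? _ []]|_]; rewrite ?orbF.
Qed.

Lemma bitseqs_uniq n : uniq (bitseqs n).
Proof.
elim: n => [|n IHn] //=; have cons_inj (b : bool) : injective (cons b) by move=> ? ? [].
rewrite cat_uniq !map_inj_uniq // IHn andbT /=; apply/hasPn => _ /mapP [s _ ->].
by apply/mapP => [[]].
Qed.

Section CharSeq.
Variables (T : finType) (e : seq T).
Hypotheses (e_uniq : uniq e) (e_full : forall x, x \in e).

Definition charseq (A : {set T}) : bitseq := [seq x \in A | x <- e].

Lemma charseq_inj : injective charseq.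
Proof.
move=> A B eqAB; apply/setP => x.
have := congr1 (fun s => nth false s (index x e)) eqAB.
by rewrite /charseq !(nth_map x) ?index_mem ?nth_index.
Qed.

Lemma perm_charseq_bitseqs :
  perm_eq (map charseq (enum {set T})) (bitseqs (size e)).
Proof.
apply: uniq_perm; [|exact: bitseqs_uniq|move=> s].
  by rewrite map_inj_uniq ?enum_uniq //; apply: charseq_inj.
rewrite mem_bitseqs; apply/mapP/eqP => [[A _ ->]|size_s]; first exact: size_map.
exists [set x | nth false s (index x e)]; first by rewrite mem_enum.
apply: (@eq_from_nth _ false); first by rewrite size_map.
move=> i; rewrite size_s => lti.
have x0 : T by move: lti; case: (e) => [//|x _ _]; exact: x.
by rewrite /charseq (nth_map x0) // inE index_uniq.
Qed.

Lemma big_charseq (R : Type) (idx : R) (op : Monoid.com_law idx)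
    (P : pred bitseq) (F : bitseq -> R) :
  \big[op/idx]_(A : {set T} | P (charseq A)) F (charseq A) =
  \big[op/idx]_(s <- bitseqs (size e) | P s) F s.
Proof. by rewrite -(perm_big _ perm_charseq_bitseqs) big_map big_enum_cond. Qed.

Lemma count_charseq (A : {set T}) : count id (charseq A) = #|A|.
Proof.
rewrite count_map -size_filter -(card_uniqP (filter_uniq _ e_uniq)).
by apply: eq_card => x; rewrite mem_filter e_full andbT.
Qed.

End CharSeq.

Fixpoint path_indep (s : bitseq) : bool :=
  if s is b :: s' then ~~ (b && head false s') && path_indep s' else true.

Fixpoint disjointb (s c : bitseq) : bool :=
  if (s, c) is (a :: s', b :: c') then ~~ (a && b) && disjointb s' c' else true.

Definition path_avoid (c s : bitseq) := path_indep s && disjointb s c.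

(* The independent sets of the path with the vertices of [c] deleted: [alt_avoid c]
   is its independence polynomial at -1 and [max_avoid c] its independence
   number. *)
Definition alt_avoid (c : bitseq) : int :=
  \sum_(s <- bitseqs (size c) | path_avoid c s) (-1) ^+ count id s.
Definition alt_avoid' (c : bitseq) : int :=
  \sum_(s <- bitseqs (size c) | ~~ head false s && path_avoid c s) (-1) ^+ count id s.
Definition max_avoid (c : bitseq) : nat :=
  \max_(s <- bitseqs (size c) | path_avoid c s) count id s.
Definition max_avoid' (c : bitseq) : nat :=
  \max_(s <- bitseqs (size c) | ~~ head false s && path_avoid c s) count id s.

Lemma path_indep_nseq0 n : path_indep (nseq n false).
Proof. by elim: n. Qed.

Lemma disjointb_nseq0l n c : disjointb (nseq n false) c.
Proof. by elim: n c => [|n IHn] []. Qed.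

Lemma disjointb_nseq0r n s : disjointb s (nseq n false).
Proof. by elim: n s => [|n IHn] [|b s] //=; rewrite andbF IHn. Qed.

Lemma path_avoid_nseq0 n c : path_avoid c (nseq n false).
Proof. by rewrite /path_avoid path_indep_nseq0 disjointb_nseq0l. Qed.

Lemma bigmaxSn (I : Type) (r : seq I) (P : pred I) (F : I -> nat) :
  has P r -> (\max_(i <- r | P i) (F i).+1 = (\max_(i <- r | P i) F i).+1)%N.
Proof.
elim: r => [//|x r IHr] /=; rewrite !big_cons.
case: (P x) => /=; last exact: IHr.
by case: (boolP (has P r)) => [/IHr ->|noP]; rewrite ?maxnSS // !big_hasC // !maxn0.
Qed.

Lemma alt_avoid_nil : alt_avoid [::] = 1.
Proof. by rewrite /alt_avoid /= big_cons big_nil addr0. Qed.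

Lemma max_avoid_nil : max_avoid [::] = 0%N.
Proof. by rewrite /max_avoid /= big_cons big_nil. Qed.

Lemma alt_avoid'E c : alt_avoid' c = alt_avoid (behead c).
Proof.
case: c => [|b c]; first by rewrite alt_avoid_nil /alt_avoid' /= big_cons big_nil addr0.
by rewrite /alt_avoid' /alt_avoid /= big_cat /= !big_map /= big_pred0 ?add0r.
Qed.

Lemma max_avoid'E c : max_avoid' c = max_avoid (behead c).
Proof.
case: c => [|b c]; first by rewrite max_avoid_nil /max_avoid' /= big_cons big_nil.
by rewrite /max_avoid' /max_avoid /= big_cat /= !big_map /= big_pred0 ?max0n.
Qed.

Lemma alt_avoid_cons b c :
  alt_avoid (b :: c) = alt_avoid c - (if b then 0 else alt_avoid (behead c)).
Proof.
rewrite -alt_avoid'E /alt_avoid /= big_cat /= !big_map /= addrC; congr (_ + _).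
case: b => /=; first by rewrite big_pred0 ?oppr0 // => s; rewrite /path_avoid /= andbF.
rewrite /alt_avoid' -sumrN; apply: eq_big => [s|s _]; last by rewrite exprS mulN1r.
by rewrite /path_avoid /=; case: (head false s); case: (path_indep s).
Qed.

Lemma max_avoid_cons b c :
  max_avoid (b :: c) = maxn (max_avoid c) (if b then 0 else (max_avoid (behead c)).+1).
Proof.
rewrite -max_avoid'E /max_avoid /= big_cat /= !big_map /= maxnC; congr maxn.
case: b => /=; first by rewrite big_pred0 // => s; rewrite /path_avoid /= andbF.
rewrite /max_avoid' -bigmaxSn.
  by apply: eq_bigl => s; rewrite /path_avoid /=; case: (head false s); case: (path_indep s).
apply/hasP; exists (nseq (size c) false); first by rewrite mem_bitseqs size_nseq.
by rewrite path_avoid_nseq0 andbT; case: (size c).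
Qed.

Lemma alt_avoid_true c : alt_avoid (true :: c) = alt_avoid c.
Proof. by rewrite alt_avoid_cons subr0. Qed.

Lemma alt_avoid_ft c : alt_avoid [:: false, true & c] = 0.
Proof. by rewrite alt_avoid_cons alt_avoid_true subrr. Qed.

Lemma alt_avoid_fft c : alt_avoid [:: false, false, true & c] = - alt_avoid c.
Proof. by rewrite alt_avoid_cons alt_avoid_ft alt_avoid_true sub0r. Qed.

Lemma alt_avoid_fff c : alt_avoid [:: false, false, false & c] = - alt_avoid c.
Proof. by rewrite !alt_avoid_cons /=; ring. Qed.

Lemma alt_avoid_nseq0_shift3 q r :
  alt_avoid (nseq (3 * q + r) false) = (-1) ^+ q * alt_avoid (nseq r false).
Proof.
elim: q => [|q IHq]; first by rewrite mul1r.
by rewrite mulnS -addnA alt_avoid_fff IHq exprS mulN1r mulNr.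
Qed.

Lemma alt_avoid_nseq0_eq0 n : (alt_avoid (nseq n false) == 0) = (n %% 3 == 1)%N.
Proof.
rewrite {1}(divn_eq n 3) mulnC alt_avoid_nseq0_shift3 mulf_eq0 signr_eq0 /=.
have : (n %% 3 < 3)%N by rewrite ltn_mod.
by case: (n %% 3)%N => [|[|[|]]] //= _; rewrite ?alt_avoid_cons /= alt_avoid_nil.
Qed.

Lemma max_avoid_true c : max_avoid (true :: c) = max_avoid c.
Proof. by rewrite max_avoid_cons maxn0. Qed.

Lemma max_avoid_ft c : max_avoid [:: false, true & c] = (max_avoid c).+1.
Proof. by rewrite max_avoid_cons max_avoid_true; apply/maxn_idPr. Qed.

Lemma max_avoid_fft c : max_avoid [:: false, false, true & c] = (max_avoid c).+1.
Proof. by rewrite max_avoid_cons max_avoid_ft max_avoid_true maxnn. Qed.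

Lemma max_avoid_nseq0 n : max_avoid (nseq n false) = uphalf n.
Proof.
elim/ltn_ind: n => -[|[|m]] IHm; rewrite ?max_avoid_nil //.
  by rewrite max_avoid_cons max_avoid_nil.
rewrite [nseq _ _]/= max_avoid_cons /= (IHm m.+1) ?(IHm m) //.
by apply/maxn_idPr; rewrite !uphalfE /= ltnS uphalfE half_leq.
Qed.

(* What follows the first vertex of a maximal independent set of a path
   containing that vertex: gaps of one or two vertices between consecutive
   members, possibly followed by a single vertex outside the set. *)
Inductive mis_tail : bitseq -> Prop :=
| mis_tail_nil : mis_tail [::]
| mis_tail_0 : mis_tail [:: false]
| mis_tail_01 r : mis_tail r -> mis_tail [:: false, true & r]
| mis_tail_001 r : mis_tail r -> mis_tail [:: false, false, true & r].

Lemma max_avoid_mis_tail r : mis_tail r -> max_avoid r = (count id r + ~~ last true r)%N.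
Proof.
elim=> {r} [|//|r _ IHr|r _ IHr]; rewrite ?max_avoid_nil //.
- by rewrite max_avoid_cons max_avoid_nil.
- by rewrite max_avoid_ft IHr /=; case: (last true r); lia.
- by rewrite max_avoid_fft IHr /=; case: (last true r); lia.
Qed.

Definition fft_blocks k := flatten (nseq k [:: false; false; true]).

Lemma alt_avoid_mis_tail r : mis_tail r -> alt_avoid r != 0 -> exists k, r = fft_blocks k.
Proof.
elim=> {r} [|//|r _ IHr|r _ IHr].
- by exists 0%N.
- by rewrite alt_avoid_cons alt_avoid_nil subrr eqxx.
- by rewrite alt_avoid_ft eqxx.
- by rewrite alt_avoid_fft oppr_eq0 => /IHr [k ->]; exists k.+1.
Qed.

Lemma alt_avoid_fft_blocks k : alt_avoid (fft_blocks k) = (-1) ^+ k.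
Proof. by elim: k => [|k IHk]; rewrite ?alt_avoid_nil //= alt_avoid_fft IHk exprS mulN1r. Qed.

Lemma max_avoid_fft_blocks k : max_avoid (fft_blocks k) = k.
Proof. by elim: k => [|k IHk]; rewrite ?max_avoid_nil //= max_avoid_fft IHk. Qed.

Lemma size_fft_blocks k : size (fft_blocks k) = (3 * k)%N.
Proof. by elim: k => [|k IHk] //=; rewrite IHk mulnS. Qed.

Lemma map_mod3_iota j k :
  [seq (i %% 3 == 0)%N | i <- iota (3 * j) (3 * k).+1] = true :: fft_blocks k.
Proof.
elim: k j => [|k IHk] j; first by rewrite /= modnMr.
rewrite mulnS -addnS iotaD map_cat -mulnSr IHk /=.
have mod3 i : ((3 * j + i) %% 3 = i %% 3)%N by rewrite mulnC modnMDl.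
by rewrite modnMr -[(3 * j).+2]addn2 -[(3 * j).+1]addn1 !mod3.
Qed.

Definition path_dominating (s : bitseq) := forall i, (i < size s)%N ->
  [|| nth false (false :: s) i, nth false s i | nth false s i.+1].

Lemma path_dominating_suffix s r :
  path_dominating (s ++ true :: r) -> path_dominating (true :: r).
Proof.
have nth_shift k : nth false (s ++ true :: r) (size s + k)%N = nth false (true :: r) k.
  by rewrite nth_cat ltnNge leq_addr addKn.
move=> dom [//|j] ltj; have := dom (size s + j.+1)%N.
by rewrite size_cat ltn_add2l -addnS !nth_shift addnS /= nth_shift; apply.
Qed.

Lemma mis_tail_maximal r :
  path_indep (true :: r) -> path_dominating (true :: r) -> mis_tail r.
Proof.
have [N] := ubnP (size r); elim: N r => // N IHN r.
case: r => [|[] r] /= lt_r ind dom //; first exact: mis_tail_nil.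
case: r lt_r ind dom => [|[] r] lt_r ind dom; first exact: mis_tail_0.
  apply/mis_tail_01/IHN => //; first by move: lt_r => /=; lia.
  exact: (path_dominating_suffix (s := [:: true; false]) dom).
case: r lt_r ind dom => [|[] r] lt_r ind dom; try by have := dom 2%N isT.
apply/mis_tail_001/IHN => //; first by move: lt_r => /=; lia.
exact: (path_dominating_suffix (s := [:: true; false; false]) dom).
Qed.

Lemma path_maximal_shape c :
  path_indep c -> path_dominating c -> (0 < size c)%N ->
  exists2 r, mis_tail r & c = true :: r \/ c = [:: false, true & r].
Proof.
case: c => [//|[] r] ind dom _.
  by exists r; [apply: mis_tail_maximal | left].
case: r ind dom => [|[] r] ind dom; try by have := dom 0%N isT.
exists r; last by right.
apply: mis_tail_maximal; first by case/andP: ind.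
exact: (path_dominating_suffix (s := [:: false]) dom).
Qed.

Lemma path_indep_nth s : path_indep s <-> forall i, ~~ (nth false s i && nth false s i.+1).
Proof.
elim: s => [|b s IHs] /=; first by split=> // _ [].
split=> [/andP [b_s /IHs inds] [|i] /=|inds]; [by case: s b_s {IHs inds} | exact: inds |].
by apply/andP; split; [case: (s) (inds 0%N) | apply/IHs => i; apply: (inds i.+1)].
Qed.

Lemma disjointb_nth s c : disjointb s c <-> forall i, ~~ (nth false s i && nth false c i).
Proof.
elim: s c => [|a s IHs] [|b c] /=; do ?by split=> // _ i; rewrite nth_nil ?andbF.
split=> [/andP [ab /IHs sc] [|i] //|sc]; first exact: sc.
by apply/andP; split; [apply: (sc 0%N) | apply/IHs => i; apply: (sc i.+1)].
Qed.

Section PathCharseq.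
Variable n : nat.
Implicit Types B C : {set 'I_n}.

Local Notation chi B := (charseq (enum 'I_n) B).

Lemma nth_charseq B (i : 'I_n) : nth false (chi B) i = (i \in B).
Proof. by rewrite /charseq (nth_map i) ?size_enum_ord // nth_ord_enum. Qed.

Lemma nth_charseq_ge B i : (n <= i)%N -> nth false (chi B) i = false.
Proof. by move=> le_n_i; rewrite nth_default // size_map size_enum_ord. Qed.

Lemma nth_charseq_setU1 C (x : 'I_n) j :
  nth false (chi (x |: C)) j = (j == x) || nth false (chi C) j.
Proof.
have [ltj|le_n_j] := ltnP j n; last first.
  by rewrite !nth_charseq_ge // gtn_eqF // (leq_trans (ltn_ord x)).
by rewrite -[j]/(Ordinal ltj : nat) !nth_charseq in_setU1.
Qed.

Lemma indep_path_rel B : indep (@path_rel n) B = path_indep (chi B).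
Proof.
apply/forall_inP/idP => [indB|/path_indep_nth indB x Bx].
  apply/path_indep_nth => i; have [lt_i1|le_n_i1] := ltnP i.+1 n; last first.
    by rewrite (nth_charseq_ge _ le_n_i1) andbF.
  rewrite -[i]/(Ordinal (ltnW lt_i1) : nat) -[i.+1]/(Ordinal lt_i1 : nat) !nth_charseq.
  by apply/andP => -[/indB /forall_inP nadj /nadj]; rewrite /path_rel eqxx.
apply/forall_inP => y By; apply/negP => /orP [] /eqP exy.
  by have := indB x; rewrite exy !nth_charseq Bx By.
by have := indB y; rewrite exy !nth_charseq Bx By.
Qed.

Lemma disjointb_charseq B C :
  disjointb (chi B) (chi C) = [forall i, (i \in B) ==> (i \notin C)].
Proof.
apply/idP/forallP => [/disjointb_nth dBC i|dBC].
  by apply/implyP => Bi; have := dBC i; rewrite !nth_charseq Bi.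
apply/disjointb_nth => i; have [lti|le_n_i] := ltnP i n; last first.
  by rewrite (nth_charseq_ge _ le_n_i).
rewrite -[i]/(Ordinal lti : nat) !nth_charseq.
by case: (_ \in B) (implyP (dBC (Ordinal lti))) => // /(_ isT) /negbTE ->.
Qed.

Lemma max_indep_path_dominating C :
  max_indep (@path_rel n) C -> path_dominating (chi C).
Proof.
case/andP => indC /forallP maxC i; rewrite size_map size_enum_ord => lti.
apply: contraT; rewrite !negb_or => /and3P [left_i mid_i right_i].
have := implyP (maxC (Ordinal lti)); rewrite -(nth_charseq C (Ordinal lti)) mid_i.
rewrite indep_path_rel => /(_ isT) /negbTE <-; apply/path_indep_nth => j.
rewrite !nth_charseq_setU1 /=.
case: eqP => [->|_] /=; first by rewrite gtn_eqF // (negbTE right_i) andbF.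
case: eqP => [eq_j1_i|_]; last by move: indC; rewrite indep_path_rel => /path_indep_nth.
by move: left_i; rewrite -eq_j1_i /= => /negbTE ->.
Qed.

End PathCharseq.

Lemma indep_suspension (T : finType) (e : rel T) (C : {set T}) (A : {set option T}) :
  indep (suspension e C) A = indep e [set x | Some x \in A] &&
    ((None \in A) ==> [forall x, (Some x \in A) ==> (x \notin C)]).
Proof.
apply/forall_inP/andP => [indA|[/forall_inP indA /implyP zA] [x|] Ax].
- split; first by apply/forall_inP => x; rewrite inE => /indA /forall_inP nadj;
    apply/forall_inP => y; rewrite inE => /nadj.
  by apply/implyP => /indA /forall_inP nadj; apply/forall_inP => x /nadj.
- apply/forall_inP => -[y|] Ay /=; last by move/forallP/(_ x)/implyP: (zA Ay); apply.
  by move: (indA x); rewrite inE => /(_ Ax) /forall_inP; apply; rewrite inE.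
- by apply/forall_inP => -[y|] Ay //=; move/forallP/(_ y)/implyP: (zA Ax); apply.
Qed.

Section SuspensionCharseq.
Variable T : finType.

Definition susp_enum : seq (option T) := None :: map Some (enum T).

Lemma susp_enum_uniq : uniq susp_enum.
Proof.
rewrite /= map_inj_uniq ?enum_uniq ?andbT; last by move=> ? ? [].
by apply/mapP => -[].
Qed.

Lemma mem_susp_enum x : x \in susp_enum.
Proof. by case: x => [x|]; rewrite inE // map_f ?orbT ?mem_enum. Qed.

Lemma charseq_susp_enum (A : {set option T}) :
  charseq susp_enum A = (None \in A) :: charseq (enum T) [set x | Some x \in A].
Proof.
by rewrite /charseq /= -map_comp; congr (_ :: _); apply: eq_map => x; rewrite /= inE.
Qed.

End SuspensionCharseq.

Section PathSuspension.
Variables (n : nat) (C : {set 'I_n}).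

Local Notation G := (suspension (@path_rel n) C).
Local Notation c := (charseq (enum 'I_n) C).

Definition susp_path_indep (s : bitseq) :=
  if s is z :: s' then path_indep s' && (z ==> disjointb s' c) else false.

Lemma indep_suspension_path A :
  indep G A = susp_path_indep (charseq (susp_enum 'I_n) A).
Proof.
rewrite indep_suspension charseq_susp_enum /= indep_path_rel disjointb_charseq.
by congr (_ && (_ ==> _)); apply: eq_forallb => i; rewrite inE.
Qed.

Lemma big_indep_suspension_path (R : Type) (idx : R) (op : Monoid.com_law idx)
    (F : bitseq -> R) :
  \big[op/idx]_(A | indep G A) F (charseq (susp_enum 'I_n) A) =
  op (\big[op/idx]_(s <- bitseqs (size c) | path_avoid c s) F (true :: s))
     (\big[op/idx]_(s <- bitseqs (size c) | path_avoid (nseq n false) s) F (false :: s)).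
Proof.
rewrite (eq_bigl _ _ indep_suspension_path).
rewrite (big_charseq (@susp_enum_uniq _) (@mem_susp_enum _)) /= size_map size_enum_ord.
rewrite size_map size_enum_ord big_cat !big_map; congr (op _ _); apply: eq_bigl => s.
by rewrite /path_avoid disjointb_nseq0r /= !andbT.
Qed.

Lemma indep_poly_suspension_path_m1 :
  (indep_poly G).[-1] = alt_avoid (nseq n false) - alt_avoid c.
Proof.
have count_susp := count_charseq (@susp_enum_uniq _) (@mem_susp_enum _).
rewrite /indep_poly horner_sum; under eq_bigr => A _ do rewrite hornerXn -count_susp.
rewrite (big_indep_suspension_path _ (fun s => (-1) ^+ count id s)) addrC /alt_avoid.
rewrite size_nseq size_map size_enum_ord.
by congr (_ + _); rewrite -sumrN; apply: eq_bigr => s _; rewrite exprS mulN1r.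
Qed.

Lemma indep_num_suspension_path :
  indep_num G = maxn (max_avoid c).+1 (max_avoid (nseq n false)).
Proof.
have count_susp := count_charseq (@susp_enum_uniq _) (@mem_susp_enum _).
rewrite /indep_num; under eq_bigr => A _ do rewrite -count_susp.
rewrite (big_indep_suspension_path _ (count id)) /max_avoid size_nseq size_map size_enum_ord.
rewrite -bigmaxSn //.
by apply/hasP; exists (nseq n false); rewrite ?mem_bitseqs ?size_nseq ?path_avoid_nseq0.
Qed.

End PathSuspension.

Lemma indep_poly_path_m1 n : (indep_poly (@path_rel n)).[-1] = alt_avoid (nseq n false).
Proof.
have e_uniq := enum_uniq 'I_n; have e_full (i : 'I_n) : i \in enum 'I_n by rewrite mem_enum.
rewrite /indep_poly horner_sum.
under eq_bigr => A _ do rewrite hornerXn -(count_charseq e_uniq e_full A).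
rewrite (eq_bigl _ _ (@indep_path_rel n)).
rewrite (big_charseq e_uniq e_full _ path_indep (fun s => (-1) ^+ count id s)).
rewrite /alt_avoid size_nseq size_enum_ord; apply: eq_bigl => s.
by rewrite /path_avoid disjointb_nseq0r andbT.
Qed.

Lemma charseq_mod3 n k : n = (3 * k + 1)%N ->
  charseq (enum 'I_n) [set i : 'I_n | (i %% 3 == 0)%N] = true :: fft_blocks k.
Proof.
move=> n_eq; rewrite -(map_mod3_iota 0) muln0 -[(3 * k).+1]addn1 -n_eq.
by rewrite -val_enum_ord -map_comp; apply: eq_map => i; rewrite /= inE.
Qed.

Section MaximalSuspension.
Variables (n : nat) (C : {set 'I_n}).
Hypotheses (n_gt0 : (0 < n)%N) (C_max : max_indep (@path_rel n) C).

Local Notation G := (suspension (@path_rel n) C).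
Local Notation c := (charseq (enum 'I_n) C).

Let size_c : size c = n. Proof. by rewrite size_map size_enum_ord. Qed.

Lemma charseq_max_indep_shape :
  exists2 r, mis_tail r & c = true :: r \/ c = [:: false, true & r].
Proof.
apply: path_maximal_shape; last by rewrite size_c.
  by rewrite -indep_path_rel; case/andP: C_max.
exact: max_indep_path_dominating.
Qed.

Lemma indep_num_suspension_max_indep :
  indep_num G = maxn (#|C| + (~~ head false c + ~~ last false c)) (uphalf n).
Proof.
rewrite indep_num_suspension_path max_avoid_nseq0.
rewrite -(count_charseq (enum_uniq _) (@mem_enum _ _) C).
have [r r_tail [->|->]] := charseq_max_indep_shape;
  rewrite ?max_avoid_true ?max_avoid_ft (max_avoid_mis_tail r_tail) /=;
  by case: (last true r) => /=; congr maxn; lia.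
Qed.

Lemma alt_avoid_max_indep_neq0 : alt_avoid c != 0 ->
  exists2 k, n = (3 * k + 1)%N & C = [set i : 'I_n | (i %% 3 == 0)%N].
Proof.
have [r r_tail [c_eq|->]] := charseq_max_indep_shape; last first.
  by rewrite alt_avoid_ft eqxx.
rewrite c_eq alt_avoid_true => /(alt_avoid_mis_tail r_tail) [k r_eq].
have n_eq : n = (3 * k + 1)%N by rewrite -size_c c_eq r_eq /= size_fft_blocks addn1.
exists k => //; apply: (charseq_inj (@mem_enum _ _)).
by rewrite (charseq_mod3 n_eq) c_eq r_eq.
Qed.

Lemma hpoly_suspension_mod3_neq1 : (n %% 3 != 1)%N ->
  a_inv_of G (hpoly G) = 0 /\
  (hpoly G)`_(indep_num G) = (-1) ^+ indep_num G * (indep_poly (@path_rel n)).[-1].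
Proof.
move=> n_mod3; have alt_c : alt_avoid c = 0.
  apply/eqP; apply: contraNT n_mod3 => /alt_avoid_max_indep_neq0 [k n_eq _].
  by rewrite n_eq mulnC modnMDl.
have PG : (indep_poly G).[-1] = (indep_poly (@path_rel n)).[-1].
  by rewrite indep_poly_suspension_path_m1 alt_c subr0 indep_poly_path_m1.
split; last by rewrite coef_hpoly_indep_num PG.
by apply: a_inv_hpoly_eq0; rewrite PG indep_poly_path_m1 alt_avoid_nseq0_eq0.
Qed.

Lemma a_inv_hpoly_suspension_lt0 :
  (n %% 3 == 1)%N -> C != [set i : 'I_n | (i %% 3 == 0)%N] -> a_inv_of G (hpoly G) < 0.
Proof.
move=> n_mod3 C_neq; have alt_c : alt_avoid c = 0.
  by apply/eqP; apply: contraNT C_neq => /alt_avoid_max_indep_neq0 [k _ ->].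
apply: a_inv_hpoly_lt0; first by rewrite indep_num_suspension_path leq_max.
by rewrite indep_poly_suspension_path_m1 alt_c subr0; apply/eqP; rewrite alt_avoid_nseq0_eq0.
Qed.

End MaximalSuspension.

Lemma hpoly_suspension_mod3_set n k : n = (3 * k + 1)%N ->
  let G := suspension (@path_rel n) [set i : 'I_n | (i %% 3 == 0)%N] in
  a_inv_of G (hpoly G) = 0 /\ (hpoly G)`_(indep_num G) = (-1) ^+ (uphalf n + k + 1).
Proof.
move=> n_eq G; have c_eq := charseq_mod3 n_eq.
have PG : (indep_poly G).[-1] = - (-1) ^+ k.
  have /eqP P_m1 : alt_avoid (nseq n false) == 0.
    by rewrite alt_avoid_nseq0_eq0 n_eq mulnC modnMDl.
  by rewrite indep_poly_suspension_path_m1 c_eq alt_avoid_true alt_avoid_fft_blocks P_m1 sub0r.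
have alphaG : indep_num G = uphalf n.
  rewrite indep_num_suspension_path c_eq max_avoid_true max_avoid_fft_blocks.
  by rewrite max_avoid_nseq0; apply/maxn_idPr; rewrite n_eq uphalfE; lia.
split; first by apply: a_inv_hpoly_eq0; rewrite PG oppr_eq0 signr_eq0.
by rewrite coef_hpoly_indep_num PG alphaG !exprD expr1 mulrN1 mulrN.
Qed.

Theorem theorem7p3 (n : nat) (C : {set 'I_n}) (x1 xn : 'I_n) :
  (2 <= n)%N ->
  max_indep (@path_rel n) C ->
  (x1 : nat) = 0%N -> (xn : nat) = n.-1 ->
  let G := suspension (@path_rel n) C in
  let c := #|C| in
  let alpha := uphalf n in
  let b := ((-1) ^+ uphalf n * (indep_poly (@path_rel n)).[-1])%R in
  let delta := ((x1 \notin C) + (xn \notin C))%N in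
  exists h : {poly int}, is_hpoly G h /\
  ( (n %% 3 == 0 \/ n %% 3 == 2)%N ->
      a_inv_of G h = 0%R /\
      ((c + delta = alpha.+1)%N -> (h`_(indep_num G))%R = (- b)%R) /\
      ((c + delta <= alpha)%N -> (h`_(indep_num G))%R = b) ) /\
  ( forall k : nat, n = (3 * k + 1)%N ->
      C = [set i : 'I_n | (i %% 3 == 0)%N] ->
      a_inv_of G h = 0%R /\
      (h`_(indep_num G))%R = ((-1) ^+ (alpha + k + 1))%R ) /\
  ( (n %% 3 == 1)%N -> C != [set i : 'I_n | (i %% 3 == 0)%N] ->
      (a_inv_of G h < 0)%R ).
Proof.
move=> n_ge2 C_max x1_0 xn_last G c alpha b delta.
have n_gt0 : (0 < n)%N by apply: ltnW.
exists (hpoly G); split; first exact: is_hpoly_hpoly.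
split; [|split]; last exact: a_inv_hpoly_suspension_lt0.
- move=> n_mod3; have n_mod3_neq1 : (n %% 3 != 1)%N by case: n_mod3 => /eqP ->.
  have [-> top] := hpoly_suspension_mod3_neq1 n_gt0 C_max n_mod3_neq1.
  have alphaG : indep_num G = maxn (c + delta) alpha.
    rewrite indep_num_suspension_max_indep // -nth0 -nth_last size_map size_enum_ord.
    by rewrite -x1_0 -xn_last !nth_charseq.
  rewrite top alphaG; split=> //; split=> [->|le_alpha]; last by rewrite (maxn_idPr le_alpha).
  by rewrite (maxn_idPl (leqnSn _)) exprS mulN1r mulNr.
- by move=> k n_eq C_eq; rewrite /G C_eq; apply: hpoly_suspension_mod3_set.
Qed.
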